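(* Under Total Store Order, $\lim_{i\to\infty}\Pr[\text{the instruction at position } i \text{ of } S_i \text{ has type } \mathrm{ST}]=2/3$ (where $m\ge i$).
   Context: Fix $m\ge 1$. A random program is a sequence $x_1,\dots,x_{m+2}$ of memory operations, each with a type in $\{\mathrm{LD},\mathrm{ST}\}$: $x_1,\dots,x_m$ have i.i.d. types, each $\mathrm{ST}$ with probability $1/2$ and $\mathrm{LD}$ with probability $1/2$; $x_{m+1}$ (the critical load) has type $\mathrm{LD}$ and $x_{m+2}$ (the critical store) has type $\mathrm{ST}$. The initial order is $S_0=(x_1,\dots,x_{m+2})$. A memory model is specified by the set of ordered type pairs $(\tau_1,\tau_2)$ for which an instruction of type $\tau_2$ may be moved ahead of an immediately preceding instruction of type $\tau_1$: Sequential Consistency (SC) allows no pair; Total Store Order (TSO) allows only the pair $(\mathrm{ST},\mathrm{LD})$ (a load may move ahead of a preceding store); Weak Ordering (WO) allows all four pairs. The settling process runs rounds $r=1,\dots,m+2$. Before round $r$, the current order $S_{r-1}$ consists of $x_1,\dots,x_{r-1}$ in some order in positions $1,\dots,r-1$, followed by $x_r,\dots,x_{m+2}$ in positions $r,\dots,m+2$. In round $r$, instruction $x_r$ (starting at position $r$) repeatedly attempts to swap with the instruction immediately preceding it in the current order: the attempt fails automatically if the pair (type of the preceding instruction, type of $x_r$) is not allowed by the memory model, or if $x_r$ is the critical store and the preceding instruction is the critical load; otherwise the attempt succeeds independently with probability $1/2$. The round ends when an attempt fails or $x_r$ reaches position $1$; the resulting order is $S_r$. *)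

From HB Require Import structures.
From mathcomp Require Import all_boot all_order all_algebra.
Set Implicit Arguments. Unset Strict Implicit. Unset Printing Implicit Defensive.
Import Order.TTheory GRing.Theory Num.Theory.
Local Open Scope ring_scope.

Definition dist (A : Type) := seq (rat * A).

Definition dret (A : Type) (a : A) : dist A := [:: (1, a)].

Definition dbind (A B : Type) (d : dist A) (f : A -> dist B) : dist B :=
  flatten [seq [seq (p.1 * q.1, q.2) | q <- f p.2] | p <- d].

Definition dprob (A : Type) (d : dist A) (E : pred A) : rat :=
  \sum_(p <- d | E p.2) p.1.

Definition ST : bool := true.
Definition LD : bool := false.

(* An instruction: (its index k, meaning it is x_k ; its type). *)
Definition instr := (nat * bool)%type.

(* Memory models: allowed t1 t2 = an instruction of type t2 may move ahead of
   an immediately preceding instruction of type t1. *)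
Definition SC_allowed (t1 t2 : bool) : bool := false.
Definition TSO_allowed (t1 t2 : bool) : bool := (t1 == ST) && (t2 == LD).
Definition WO_allowed (t1 t2 : bool) : bool := true.

(* The program x_1..x_{m+2}: ts are the types of x_1..x_m;
   x_{m+1} is the critical load, x_{m+2} the critical store. *)
Definition prog (m : nat) (ts : seq bool) : seq instr :=
  [seq (k.+1, nth LD (ts ++ [:: LD; ST]) k) | k <- iota 0 m.+2].

Fixpoint tydist (n : nat) : dist (seq bool) :=
  match n with
  | 0 => dret [::]
  | n'.+1 => [seq (p.1 / 2%:R, b :: p.2) | b <- [:: ST; LD], p <- tydist n']
  end.

(* R is the already-settled prefix listed in REVERSE order
   (head = instruction at position r-1, last = position 1); x starts at
   position r and repeatedly tries to swap with its predecessor. *)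
Fixpoint settle (allowed : bool -> bool -> bool) (m : nat) (x : instr)
    (R : seq instr) : dist (seq instr) :=
  match R with
  | [::] => dret [:: x]                       (* reached position 1 *)
  | y :: rest =>
      if ~~ allowed y.2 x.2 || ((x.1 == m.+2)%N && (y.1 == m.+1)%N)
      then dret (x :: R)                      (* automatic failure *)
      else (1 / 2%:R, x :: R)                 (* attempt fails *)
           :: [seq (q.1 / 2%:R, y :: q.2) | q <- settle allowed m x rest]
                                              (* attempt succeeds *)
  end.

Fixpoint run (allowed : bool -> bool -> bool) (m : nat) (ts : seq bool)
    (r : nat) : dist (seq instr) :=
  match r with
  | 0 => dret [::]
  | r'.+1 => dbind (run allowed m ts r')
               (fun R => settle allowed m (nth (0%N, LD) (prog m ts) r') R)
  end.

Definition order_of (m : nat) (ts : seq bool) (r : nat) (R : seq instr) :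
  seq instr := rev R ++ drop r (prog m ts).

Definition Sdist (allowed : bool -> bool -> bool) (m r : nat) :
  dist (seq instr) :=
  dbind (tydist m) (fun ts =>
    [seq (q.1, order_of m ts r q.2) | q <- run allowed m ts r]).

Definition prob_ST_at (allowed : bool -> bool -> bool) (m i : nat) : rat :=
  dprob (Sdist allowed m i) (fun S => (nth (0%N, LD) S i.-1).2 == ST).

From HB Require Import structures.
From mathcomp Require Import all_boot all_order all_algebra zify ring.
Import Order.TTheory GRing.Theory Num.Theory.
Set Implicit Arguments. Unset Strict Implicit.
Local Open Scope ring_scope.

(* Under TSO only a load may overtake a store, so in round r the instruction
   x_r either stays at position r (always, if it is a store) or, being a load
   behind a store, swaps with that store with probability 1/2; afterwards
   position r is frozen.  Hence, for fixed types ts of x_1..x_m and r <= m,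
   the probability q_r that position r of S_r holds a store satisfies
       q_0 = 0,   q_r = 1 if x_r is ST,   q_r = q_{r-1}/2 if x_r is LD.
   Averaging over the fair i.i.d. types gives E[q_r] = 1/2 + E[q_{r-1}]/4,
   i.e. E[q_r] = 2/3 - (2/3)/4^r, which tends to 2/3.
   The file first develops expectations over finite distributions, then the
   laws of the type distribution, then the one-round analysis of settling
   under TSO (lemma [settle_top_ST]), the closed form [prob_ST_at_TSO], and
   finally the limit [claim1]. *)

Definition expect (A : Type) (d : dist A) (g : A -> rat) : rat :=
  foldr (fun p acc => p.1 * g p.2 + acc) 0 d.

Definition supported (A : Type) (d : dist A) (P : pred A) : bool :=
  all (fun p => P p.2) d.

Lemma dprob_expect (A : Type) (d : dist A) (E : pred A) :
  dprob d E = expect d (fun a => (E a)%:R).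
Proof.
elim: d => [|p d IH]; first by rewrite /dprob big_nil.
rewrite /dprob big_cons -/(dprob d E) IH /=.
by case: (E p.2); rewrite ?mulr1 ?mulr0 ?add0r.
Qed.

Lemma expect_cat (A : Type) (d1 d2 : dist A) (g : A -> rat) :
  expect (d1 ++ d2) g = expect d1 g + expect d2 g.
Proof. by elim: d1 => [|p d IH] /=; rewrite ?add0r // IH addrA. Qed.

Lemma expect_reweight (A B : Type) (d : dist A) (h : A -> B) (g : B -> rat) c :
  expect [seq (q.1 * c, h q.2) | q <- d] g = c * expect d (fun a => g (h a)).
Proof.
by elim: d => [|p d IH] /=; rewrite ?mulr0 // IH mulrDr [p.1 * c]mulrC mulrA.
Qed.

Lemma expect_relabel (A B : Type) (d : dist A) (h : A -> B) (g : B -> rat) :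
  expect [seq (q.1, h q.2) | q <- d] g = expect d (fun a => g (h a)).
Proof. by elim: d => [|p d IH] //=; rewrite IH. Qed.

Lemma expect_bind (A B : Type) (d : dist A) (f : A -> dist B) (g : B -> rat) :
  expect (dbind d f) g = expect d (fun a => expect (f a) g).
Proof.
elim: d => [|p d IH] //; rewrite /dbind /= -/(dbind d f) expect_cat IH.
congr (_ + _); elim: (f p.2) => [|q s IHs] /=; first by rewrite mulr0.
by rewrite IHs mulrDr mulrA.
Qed.

Lemma expect_scale (A : Type) (d : dist A) (g : A -> rat) c :
  expect d (fun a => c * g a) = c * expect d g.
Proof. by elim: d => [|p d IH] /=; rewrite ?mulr0 // IH mulrDr mulrCA. Qed.

Lemma expect_eq_on (A : Type) (P : pred A) (d : dist A) (g1 g2 : A -> rat) :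
  supported d P -> {in P, g1 =1 g2} -> expect d g1 = expect d g2.
Proof.
rewrite /supported => + H; elim: d => [|p d IH] //= /andP [Hp Hd].
by rewrite IH // H.
Qed.

Lemma supported_bind (A B : Type) (P : pred A) (Q : pred B) (d : dist A)
    (f : A -> dist B) :
  supported d P -> {in P, forall a, supported (f a) Q} ->
  supported (dbind d f) Q.
Proof.
rewrite /supported => + H; elim: d => [|p d IH] //= /andP [Hp Hd].
rewrite /dbind /= -/(dbind d f) all_cat IH // andbT all_map.
exact: H.
Qed.

Lemma half_add_half : 2%:R^-1 + 2%:R^-1 = 1 :> rat.
Proof. by field. Qed.

Lemma tydist_front n (f : seq bool -> rat) :
  expect (tydist n.+1) f =
  expect (tydist n) (fun ts => f (ST :: ts)) / 2%:R +
  expect (tydist n) (fun ts => f (LD :: ts)) / 2%:R.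
Proof. by rewrite /= !expect_cat /= addr0 !expect_reweight ![_^-1 * _]mulrC. Qed.

Lemma tydist_rear n (f : seq bool -> rat) :
  expect (tydist n.+1) f =
  expect (tydist n) (fun ts => f (rcons ts ST)) / 2%:R +
  expect (tydist n) (fun ts => f (rcons ts LD)) / 2%:R.
Proof.
elim: n f => [|n IH] f; first by rewrite tydist_front.
rewrite tydist_front (IH (fun ts => f (ST :: ts))) (IH (fun ts => f (LD :: ts))).
rewrite (tydist_front _ (fun ts => f (rcons ts ST))).
rewrite (tydist_front _ (fun ts => f (rcons ts LD))) /=.
by rewrite !mulrDl -!addrA; congr (_ + _); rewrite !addrA; congr (_ + _); rewrite addrC.
Qed.

Lemma tydist_size n : supported (tydist n) (fun ts => size ts == n).
Proof.
elim: n => [|n IH] //; rewrite /supported /= !all_cat !all_map /= andbT.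
by apply/andP; split; apply: sub_all IH => p.
Qed.

Lemma tydist_mass n : expect (tydist n) (fun _ => 1) = 1.
Proof.
elim: n => [|n IH]; first by rewrite /= mulr1 addr0.
by rewrite tydist_front IH -mulrDl divff // pnatr_eq0.
Qed.

Lemma tydist_prefix n k (f : seq bool -> rat) :
  (forall ts b, (n <= size ts)%N -> f (rcons ts b) = f ts) ->
  expect (tydist (n + k)) f = expect (tydist n) f.
Proof.
move=> Hf; elim: k => [|k IH]; first by rewrite addn0.
have Hext b : expect (tydist (n + k)) (fun ts => f (rcons ts b)) =
              expect (tydist (n + k)) f.
  apply: (expect_eq_on (tydist_size _)) => ts /eqP Hs.
  by rewrite Hf // Hs leq_addr.
by rewrite addnS tydist_rear !Hext IH; field.
Qed.

Lemma settle_mass allowed m x (R : seq instr) :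
  expect (settle allowed m x R) (fun _ => 1) = 1.
Proof.
elim: R => [|y R IH] /=; first by rewrite mulr1 addr0.
case: ifP => _ /=; first by rewrite mulr1 addr0.
by rewrite mulr1 expect_reweight IH !mulr1 mul1r half_add_half.
Qed.

Lemma run_mass allowed m ts r : expect (run allowed m ts r) (fun _ => 1) = 1.
Proof.
elim: r => [|r IH] /=; first by rewrite mulr1 addr0.
rewrite expect_bind -[RHS]IH.
by apply: (@expect_eq_on _ predT) => [|R _]; [apply/allP | rewrite settle_mass].
Qed.

Lemma settle_size allowed m x (R : seq instr) :
  supported (settle allowed m x R) (fun R' => size R' == (size R).+1).
Proof.
rewrite /supported; elim: R => [|y R IH] //=; case: ifP => _ /=; rewrite eqxx //.
by rewrite all_map; exact: IH.
Qed.

Lemma run_size allowed m ts r : supported (run allowed m ts r) (fun R => size R == r).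
Proof.
elim: r => [|r IH] //=; apply: (supported_bind IH) => R /eqP <-.
exact: settle_size.
Qed.

(* Indicator that the last settled position (head of the reversed prefix)
   holds a store. *)
Definition top_ST (R : seq instr) : rat := ((head (0%N, LD) R).2 == ST)%:R.

(* One round under TSO for a non-critical instruction of type b: a store
   stays on top; a load swaps below the top with probability 1/2 exactly when
   the top is a store, and then that store remains on top. *)
Lemma settle_top_ST m k b (R : seq instr) : k != m.+2 ->
  expect (settle TSO_allowed m (k, b) R) top_ST = if b then 1 else top_ST R / 2%:R.
Proof.
move=> Hk; case: R => [|[j c] R] /=.
  by case: b; rewrite /top_ST /= ?mulr1 ?mulr0 ?addr0 ?mul0r.
rewrite (negbTE Hk) andFb orbF /TSO_allowed.
case: b; case: c; rewrite /top_ST /= ?mulr1 ?mulr0 ?addr0 ?mul0r ?add0r //.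
by rewrite expect_reweight settle_mass mulr1 mul1r.
Qed.

(* Conditional probability, given the types ts, that position r of S_r holds
   a store (valid for r <= m, i.e. before the critical instructions). *)
Fixpoint st_prob (ts : seq bool) (r : nat) : rat :=
  if r is r'.+1 then (if nth LD ts r' then 1 else st_prob ts r' / 2%:R) else 0.

Lemma st_prob_rcons ts b r : (r <= size ts)%N -> st_prob (rcons ts b) r = st_prob ts r.
Proof. by elim: r => [|r IH] Hr //=; rewrite nth_rcons Hr IH // ltnW. Qed.

Lemma prog_nth m ts r : size ts = m -> (r < m)%N ->
  nth (0%N, LD) (prog m ts) r = (r.+1, nth LD ts r).
Proof.
move=> Hs Hr; rewrite /prog (nth_map 0%N); last by rewrite size_iota; lia.
by rewrite nth_iota ?add0n ?nth_cat ?Hs ?Hr //; lia.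
Qed.

Lemma run_top_ST m ts r : size ts = m -> (r <= m)%N ->
  expect (run TSO_allowed m ts r) top_ST = st_prob ts r.
Proof.
move=> Hs; elim: r => [|r IH] Hr; first by rewrite /= /top_ST /= mul1r addr0.
rewrite [run _ _ _ _]/= expect_bind prog_nth //.
rewrite (@expect_eq_on _ predT _ _
           (fun R => if nth LD ts r then 1 else 2%:R^-1 * top_ST R)).
- rewrite [st_prob _ _]/=; case: (nth LD ts r); first by rewrite run_mass.
  by rewrite expect_scale IH ?(ltnW Hr) // mulrC.
- by apply/allP.
- move=> R _; rewrite settle_top_ST; last by apply/eqP; lia.
  by case: (nth LD ts r); rewrite // mulrC.
Qed.

Lemma mean_st_prob n :
  expect (tydist n) (fun ts => st_prob ts n) = 2%:R / 3%:R - 2%:R / 3%:R / (4 ^ n)%:R.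
Proof.
elim: n => [|n IH]; first by rewrite /= mul1r addr0 expn0 divr1 subrr.
rewrite tydist_rear.
rewrite (expect_eq_on (tydist_size n) (g1 := fun ts => st_prob (rcons ts ST) n.+1)
                      (g2 := fun _ => 1)); last first.
  by move=> ts /eqP Hs /=; rewrite nth_rcons Hs ltnn eqxx.
rewrite (expect_eq_on (tydist_size n) (g1 := fun ts => st_prob (rcons ts LD) n.+1)
                      (g2 := fun ts => 2%:R^-1 * st_prob ts n)); last first.
  by move=> ts /eqP Hs /=; rewrite nth_rcons Hs ltnn eqxx st_prob_rcons ?Hs // mulrC.
rewrite tydist_mass expect_scale IH expnS natrM.
have H4 : (4 ^ n)%:R != 0 :> rat by rewrite pnatr_eq0 expn_eq0.
by field; rewrite H4.
Qed.

Lemma order_of_at m ts i (R : seq instr) : (1 <= i)%N -> size R = i ->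
  nth (0%N, LD) (order_of m ts i R) i.-1 = head (0%N, LD) R.
Proof.
move=> Hi HR; rewrite /order_of nth_cat size_rev HR prednK // leqnn.
by rewrite nth_rev HR ?prednK // subnn nth0.
Qed.

Lemma prob_ST_at_TSO m i : (1 <= i)%N -> (i <= m)%N ->
  prob_ST_at TSO_allowed m i = 2%:R / 3%:R - 2%:R / 3%:R / (4 ^ i)%:R.
Proof.
move=> Hi Him; rewrite /prob_ST_at dprob_expect /Sdist expect_bind.
rewrite (expect_eq_on (tydist_size m) (g2 := fun ts => st_prob ts i)).
  by rewrite -(subnKC Him) tydist_prefix ?mean_st_prob // => ts b; exact: st_prob_rcons.
move=> ts /eqP Hs; rewrite expect_relabel -(run_top_ST Hs Him).
apply: (expect_eq_on (run_size _ _ _ _)) => R /eqP HR.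
by rewrite order_of_at.
Qed.

Lemma div_pow_small (c eps : rat) (b : nat) : 0 < eps -> (1 < b)%N ->
  exists N : nat, forall i : nat, (N <= i)%N -> `|c| / (b ^ i)%:R < eps.
Proof.
move=> Heps Hb.
have /archi_boundP Hbound : 0 <= `|c| / eps by rewrite divr_ge0 // ltW.
exists (Num.Def.archi_bound (`|c| / eps)) => i Hi.
have Hpow : 0 < (b ^ i)%:R :> rat by rewrite ltr0n expn_gt0 (ltnW Hb).
rewrite ltr_pdivrMr // -ltr_pdivrMl // mulrC.
apply: (lt_le_trans Hbound); rewrite ler_nat.
exact: leq_trans Hi (ltnW (ltn_expl i Hb)).
Qed.

Theorem claim1 :
  forall eps : rat, 0 < eps ->
  exists N : nat, forall i m : nat, (N <= i)%N -> (1 <= m)%N -> (i <= m)%N ->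
    `| prob_ST_at TSO_allowed m i - 2%:R / 3%:R | < eps.
Proof.
move=> eps Heps.
have [N HN] := div_pow_small (2%:R / 3%:R) Heps (isT : (1 < 4)%N).
exists N.+1 => i m HNi Hm Him.
have Hi : (1 <= i)%N by lia.
rewrite prob_ST_at_TSO //.
rewrite addrC addKr normrN normrM normrV ?unitfE ?pnatr_eq0 ?expn_eq0 //.
by rewrite normr_nat; apply: HN; lia.
Qed.
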